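(* Let $n=p^{3}q$ with primes $2\leq p<q$. Let $\mathcal{D}_{S_{1}},\mathcal{D}_{S_{2}}$ be subsets of $\mathcal{D}_{[n]}\setminus\{n\}$. If $\mathrm{Spec}(\mathrm{ICG}(n,\mathcal{D}_{S_{1}}))=\mathrm{Spec}(\mathrm{ICG}(n,\mathcal{D}_{S_{2}}))$, then $\mathcal{D}_{S_{1}}=\mathcal{D}_{S_{2}}$.
   Context: For an integer $n\ge1$, identify $\mathbb{Z}_n$ with $[n]=\{1,\dots,n\}$ ($n$ playing the role of $0$). For a positive divisor $d$ of $n$, $G_n(d)=\{j\in[n]:\gcd(j,n)=d\}$. $\mathcal{D}_{[n]}$ denotes the set of all positive divisors of $n$. For $\mathcal{D}\subseteq\mathcal{D}_{[n]}\setminus\{n\}$, $\mathrm{ICG}(n,\mathcal{D})$ denotes the circulant graph $\mathrm{Cay}(\mathbb{Z}_n,S)$ with connection set $S=\bigcup_{d\in\mathcal{D}}G_n(d)$ (vertex set $\mathbb{Z}_n$, $g\sim h$ iff $h-g\in S$); we write $\mathcal{D}=\mathcal{D}_S$. $\mathrm{Spec}$ denotes the multiset of eigenvalues of the adjacency matrix. *)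

From HB Require Import structures.
From mathcomp Require Import all_boot all_order all_algebra all_field.
Set Implicit Arguments. Unset Strict Implicit. Unset Printing Implicit Defensive.
Import GRing.Theory Num.Theory.
Local Open Scope ring_scope.

(* Vertices of Z_n are the ordinals 'I_n (residues 0..n-1; residue 0 plays
   the role of n in [n]).  The difference h - g mod n is the residue
   (h + n - g) %% n, and gcd(r, n) for r = 0 is gcdn 0 n = n, consistent
   with the identification 0 <-> n.  Hence h - g \in S = U_{d in D} G_n(d)
   iff gcd((h-g) mod n, n) \in D. *)

Definition ICG_adj (n : nat) (D : seq nat) : 'M[algC]_n :=
  \matrix_(g < n, h < n) ((gcdn ((h + n - g) %% n) n \in D)%:R : algC).

Definition Spec (m : nat) (A : 'M[algC]_m) : algC -> nat :=
  fun lambda => mup lambda (char_poly A).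

From HB Require Import structures.
From mathcomp Require Import all_boot all_order all_algebra all_field.
From mathcomp Require Import zify.
From mathcomp.algebra_tactics Require Import ring.
Set Implicit Arguments. Unset Strict Implicit. Unset Printing Implicit Defensive.
Import GRing.Theory Num.Theory.
Local Open Scope ring_scope.

(* ICG(n, D) is a circulant matrix, so the Fourier matrix diagonalises it and its
   eigenvalues are lambda_k = sum_s [gcd(s, n) \in D] w^(sk).  For n = p^3 q, lambda_k
   only depends on the class (min(v_p k, 3), [q | k]) of k and is an integer combination
   of Ramanujan sums, so the spectrum is a multiset of eight class values weighted by the
   class sizes.  Modulo q the classes with q | k merge with those with q coprime to k; for
   p >= 3 the class sizes have distinct subset sums, which recovers the eigenvalue of every
   class modulo q, and a triangular back-substitution (p being invertible mod q) recovers
   which p^i q^j lie in D.  For p = 2 subset sums are ambiguous and the finitely many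
   divisor sets are compared by computation. *)

Lemma char_poly_conj n (F G A : 'M[algC]_n) :
  F *m G = 1%:M -> char_poly (F *m A *m G) = char_poly A.
Proof.
move=> FG.
set fF := map_mx polyC F; set fG := map_mx polyC G.
have fFG : fF *m fG = 1%:M by rewrite -map_mxM FG map_scalar_mx.
rewrite /char_poly /char_poly_mx !map_mxM -/fF -/fG.
have eqX : ('X%:M : 'M_n) = fF *m 'X%:M *m fG.
  by rewrite scalar_mxC -mulmxA fFG mulmx1.
rewrite {1}eqX -mulmxBl -mulmxBr !det_mulmx mulrC mulrA -det_mulmx.
have -> : \det (fG *m fF) = 1 by rewrite det_mulmx mulrC -det_mulmx fFG det1.
by rewrite mul1r.
Qed.

Lemma sum_expr_unity (z : algC) m : z ^+ m = 1 ->
  \sum_(t < m) z ^+ t = if z == 1 then m%:R else 0.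
Proof.
case: eqP => [->|nz1 zm].
  by move=> _; under eq_bigr do rewrite expr1n; rewrite sumr_const card_ord.
have := subrX1 z m; rewrite zm subrr => /esym/eqP.
by rewrite mulf_eq0 subr_eq0 (introF eqP nz1) /= => /eqP.
Qed.

Section Circulant.
Variables (n : nat) (w : algC).
Hypothesis wP : n.-primitive_root w.
Variable f : nat -> algC.

Definition circulant : 'M[algC]_n := \matrix_(g < n, h < n) f ((h + n - g) %% n).
Definition circulant_eigenvalue (k : nat) : algC := \sum_(s < n) f s * w ^+ (s * k).
Definition fourier_mx : 'M[algC]_n := \matrix_(i < n, j < n) w ^+ (i * j).
Definition inv_fourier_mx : 'M[algC]_n :=
  \matrix_(i < n, j < n) (n%:R^-1 * w^-1 ^+ (i * j)).

Lemma prim_root_neq0 : w != 0.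
Proof.
apply/eqP=> w0; have := prim_expr_order wP; rewrite w0 expr0n.
rewrite (gtn_eqF (prim_order_gt0 wP)) => /eqP.
by rewrite eq_sym oner_eq0.
Qed.

Lemma fourier_mxK : fourier_mx *m inv_fourier_mx = 1%:M.
Proof.
apply/matrixP=> i j; rewrite !mxE.
have -> : \sum_(k < n) fourier_mx i k * inv_fourier_mx k j
    = n%:R^-1 * \sum_(k < n) (w ^+ i * w^-1 ^+ j) ^+ k.
  rewrite mulr_sumr; apply: eq_bigr => k _; rewrite !mxE.
  by rewrite mulrCA exprMn -!exprM mulnC [(k * j)%N]mulnC.
have wn : w ^+ n = 1 := prim_expr_order wP.
rewrite sum_expr_unity; last first.
  rewrite exprMn -!exprM mulnC [(j * n)%N]mulnC !exprM wn expr1n mul1r.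
  by rewrite exprVn wn invr1 expr1n.
have -> : (w ^+ i * w^-1 ^+ j == 1) = (i == j).
  have -> : (i == j) = (w ^+ i == w ^+ j).
    by rewrite (eq_prim_root_expr wP) !modn_small.
  rewrite exprVn; apply/eqP/eqP => [/divr1_eq //|->].
  by rewrite divff // expf_neq0 // prim_root_neq0.
case: (i == j); last by rewrite mulr0.
by rewrite mulVf // pnatr_eq0 -lt0n (prim_order_gt0 wP).
Qed.

Lemma circulant_fourier :
  circulant *m fourier_mx = fourier_mx *m diag_mx (\row_k circulant_eigenvalue k).
Proof.
have n0 := prim_order_gt0 wP.
apply/matrixP=> g k; rewrite mul_mx_diag !mxE mulr_sumr.
pose h (s : 'I_n) : 'I_n := Ordinal (ltn_pmod (s + g) n0).
have hinj : injective h.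
  move=> s t /(congr1 val) /= /eqP; rewrite eqn_modDr !modn_small //.
  by move/eqP/val_inj.
rewrite (reindex_inj hinj); apply: eq_bigr => s _; rewrite !mxE /=.
have -> : (((s + g) %% n + n - g) %% n = s)%N.
  rewrite -addnBA ?(ltnW (ltn_ord g)) // modnDml -addnA subnKC ?(ltnW (ltn_ord g)) //.
  by rewrite modnDr modn_small.
rewrite -(prim_expr_mod wP) modnMml (prim_expr_mod wP).
by rewrite mulrCA -exprD mulnDl addnC.
Qed.

Lemma char_poly_circulant :
  char_poly circulant = \prod_(k < n) ('X - (circulant_eigenvalue k)%:P).
Proof.
have -> : circulant = fourier_mx *m diag_mx (\row_k circulant_eigenvalue k) *m inv_fourier_mx.
  by rewrite -circulant_fourier -mulmxA fourier_mxK mulmx1.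
rewrite char_poly_conj ?fourier_mxK // char_poly_trig ?diag_mx_is_trig //.
by apply: eq_bigr => k _; rewrite !mxE eqxx mulr1n.
Qed.

End Circulant.

Definition gcd_indicator (n : nat) (D : seq nat) (s : nat) : algC := (gcdn s n \in D)%:R.

Lemma Spec_ICG_adj n (w : algC) (D : seq nat) mu : n.-primitive_root w ->
  Spec (ICG_adj n D) mu =
  count_mem mu [seq circulant_eigenvalue n w (gcd_indicator n D) k | k <- iota 0 n].
Proof.
move=> wP; have -> : ICG_adj n D = circulant n (gcd_indicator n D).
  by apply/matrixP => i j; rewrite !mxE.
rewrite /Spec (char_poly_circulant wP) -mu_prod_XsubC big_map.
by rewrite -(subn0 n) -/(index_iota 0 n) big_mkord subn0.
Qed.

Lemma sum_dvdn_mul (F : nat -> algC) e m : (0 < e)%N ->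
  \sum_(0 <= s < e * m) ((e %| s)%:R * F s) = \sum_(0 <= t < m) F (e * t)%N.
Proof.
move=> e0; elim: m => [|m IH]; first by rewrite muln0 !big_geq.
rewrite big_nat_recr //= -IH mulnS addnC (big_cat_nat _ (leq_addr _ _)) //=.
congr (_ + _).
rewrite -{1}[(e * m)%N]add0n big_addn addKn (big_ltn e0) /= add0n dvdn_mulr // mul1r.
rewrite big_nat_cond big1 ?addr0 // => i /andP[/andP[i1 ie] _].
by rewrite dvdn_addl ?dvdn_mulr // gtnNdvd ?mul0r.
Qed.

Section DivisorClass.
Local Open Scope nat_scope.
Variables p q : nat.
Hypotheses (pP : prime p) (qP : prime q) (pq : p != q).

(* min(v_p s, 3); in particular [pval3 0 = 3], as residue 0 stands for n. *)
Definition pval3 (s : nat) : nat :=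
  if p ^ 3 %| s then 3 else if p ^ 2 %| s then 2 else if p %| s then 1 else 0.

Lemma coprime_pq a b : coprime (p ^ a) (q ^ b).
Proof. by rewrite coprimeXl // coprimeXr // prime_coprime // dvdn_prime2. Qed.

Lemma pval3_le3 s : pval3 s <= 3.
Proof. by rewrite /pval3; repeat case: ifP. Qed.

Lemma dvdn_pval3 s : p ^ pval3 s %| s.
Proof. by rewrite /pval3; repeat case: ifP => //; rewrite expn1. Qed.

Lemma dvdn_pexp_pval3 c s : c <= 3 -> (p ^ c %| s) = (c <= pval3 s).
Proof.
move=> c3; apply/idP/idP => [|cv]; last exact: dvdn_trans (dvdn_exp2l p cv) (dvdn_pval3 s).
rewrite /pval3; case: ifP => // n3; case: ifP => [_|n2].
  by move: c3; rewrite leq_eqVlt => /orP[/eqP ->|]; rewrite ?n3.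
case: ifP => [_|n1]; move: c3; case: c => [|[|[|[|]]]] //; by rewrite ?n3 ?n2 ?expn1 ?n1.
Qed.

Lemma gcdn_p3q s : gcdn s (p ^ 3 * q) = p ^ pval3 s * q ^ (q %| s).
Proof.
have q0 : 0 < q := prime_gt0 qP.
apply: gcdn_def.
- rewrite Gauss_dvd ?coprime_pq // dvdn_pval3 /=.
  by case E: (q %| s); rewrite ?expn1 ?expn0 ?E ?dvd1n.
- apply: dvdn_mul; first exact/dvdn_exp2l/pval3_le3.
  by case: (q %| s); rewrite ?expn1.
move=> d ds dn.
have pdvd e : e %| p ^ 3 -> e %| s -> e %| p ^ pval3 s.
  by case/(dvdn_pfactor _ _ pP) => a a3 -> pas; apply: dvdn_exp2l; rewrite -dvdn_pexp_pval3.
case qd: (q %| d).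
  move: ds dn; case/dvdnP: qd => e -> ds; rewrite dvdn_pmul2r // => dn.
  rewrite (dvdn_trans (dvdn_mull _ _) ds) //= expn1 dvdn_pmul2r //.
  by apply: pdvd => //; apply: dvdn_trans ds; apply: dvdn_mulr.
have cdq : coprime d q by rewrite coprime_sym prime_coprime // qd.
by rewrite Gauss_dvdl // in dn; apply/dvdn_mulr/pdvd.
Qed.

End DivisorClass.

Definition pdvd_sum (p a v : nat) : nat := (p ^ (3 - a) * (3 - a <= v))%N.
Definition qdvd_sum (q b : nat) (wv : bool) : nat := (q ^ (1 - b) * (1 - b <= wv))%N.

(* The Ramanujan sums c_(p^(3-i))(p^v) and c_(q^(1-j))(q^wv). *)
Definition pramanujan (p i v : nat) : int :=
  (pdvd_sum p i v)%:Z - (i < 3)%N%:Z * (pdvd_sum p i.+1 v)%:Z.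
Definition qramanujan (q : nat) (j wv : bool) : int :=
  (qdvd_sum q j wv)%:Z - (~~ j)%N%:Z * (qdvd_sum q 1 wv)%:Z.

Definition class_eigenvalue p q (bt : nat -> bool -> bool) (v : nat) (wv : bool) : int :=
  \sum_(i < 4) \sum_(j : bool) (bt i j)%:Z * pramanujan p i v * qramanujan q j wv.

Definition divisor_bits p q (D : seq nat) : nat -> bool -> bool :=
  fun i j => (p ^ i * q ^ j \in D)%N.

Lemma natr_count (R : pzSemiRingType) (T : Type) (a : pred T) (s : seq T) :
  (count a s)%:R = \sum_(x <- s) (a x)%:R :> R.
Proof. by elim: s => [|x s IH]; rewrite ?big_nil // big_cons /= natrD IH. Qed.

Section ClassSums.
Variables p q : nat.
Hypotheses (pP : prime p) (qP : prime q) (pq : p != q).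
Local Notation n := (p ^ 3 * q)%N.
Variable w : algC.
Hypothesis wP : n.-primitive_root w.

Lemma sum_dvdn_root a b k : (a <= 3)%N -> (b <= 1)%N ->
  \sum_(s < n) ((p ^ a %| s)%N%:R * (q ^ b %| s)%N%:R * w ^+ (s * k))
  = (pdvd_sum p a (pval3 p k) * qdvd_sum q b (q %| k))%N%:R.
Proof.
move=> a3 b1.
set e := (p ^ a * q ^ b)%N; set m := (p ^ (3 - a) * q ^ (1 - b))%N.
have e0 : (0 < e)%N by rewrite muln_gt0 !expn_gt0 !prime_gt0.
have em : n = (e * m)%N by rewrite /e /m mulnACA -!expnD !subnKC.
under eq_bigr do rewrite -natrM mulnb -Gauss_dvd ?coprime_pq //.
rewrite -(big_mkord xpredT (fun s => (e %| s)%:R * w ^+ (s * k))) em.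
rewrite (sum_dvdn_mul (fun s => w ^+ (s * k))) // big_mkord.
under eq_bigr do rewrite mulnC mulnA exprM.
rewrite sum_expr_unity; last first.
  by rewrite -exprM -mulnA -em mulnC exprM (prim_expr_order wP) expr1n.
rewrite -(prim_order_dvd wP) em [(k * e)%N]mulnC dvdn_pmul2l // /m.
rewrite Gauss_dvd ?coprime_pq // /pdvd_sum /qdvd_sum -dvdn_pexp_pval3 ?leq_subr //.
case: (p ^ (3 - a) %| k)%N; rewrite ?muln0 //= natrM.
clear e e0 em m; case: b b1 => [|[|]] // _; case: (q %| k)%N;
  by rewrite /= ?subn0 ?subnn ?expn1 ?expn0 ?dvd1n ?muln1 ?muln0 ?natrM ?mulr1.
Qed.

Lemma pval3_eq i s : (i <= 3)%N ->
  ((pval3 p s == i)%N%:R : algC)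
  = (p ^ i %| s)%N%:R - (i < 3)%N%:R * (p ^ i.+1 %| s)%N%:R.
Proof.
move=> i3; have v3 := pval3_le3 p s.
case: (ltnP i 3) => [i3'|i3']; last first.
  have -> : i = 3%N by apply/eqP; rewrite eqn_leq i3 i3'.
  by rewrite mul0r subr0 dvdn_pexp_pval3 // eqn_leq v3.
rewrite !dvdn_pexp_pval3 // mul1r.
by have [lt|gt|eq] := ltngtP (pval3 p s) i; rewrite /= ?subrr ?subr0.
Qed.

Lemma qdvd_eq (j : bool) s :
  (((q %| s)%N == j)%N%:R : algC)
  = (q ^ j %| s)%N%:R - (~~ j)%N%:R * (q ^ 1 %| s)%N%:R.
Proof.
rewrite expn1; case: j => /=; rewrite ?expn1 ?mul0r ?subr0 ?eqb_id //.
by rewrite mul1r expn0 dvd1n; case: (q %| s)%N; rewrite ?subrr ?subr0.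
Qed.

Lemma sum_class_root i (j : bool) k : (i <= 3)%N ->
  \sum_(s < n) (((pval3 p s == i) && ((q %| s)%N == j))%N%:R * w ^+ (s * k))
  = (pramanujan p i (pval3 p k) * qramanujan q j (q %| k)%N)%:~R.
Proof.
move=> i3; have jb : (j <= 1)%N by case: j.
under eq_bigr do rewrite -mulnb natrM pval3_eq // qdvd_eq.
pose dp (a s : nat) : algC := (p ^ a %| s)%N%:R.
pose dq (b s : nat) : algC := (q ^ b %| s)%N%:R.
have expand (c d : algC) : \sum_(s < n) ((dp i s - c * dp i.+1 s) * (dq j s - d * dq 1%N s)
        * w ^+ (s * k))
    = \sum_(s < n) (dp i s * dq j s * w ^+ (s * k))
      - d * \sum_(s < n) (dp i s * dq 1%N s * w ^+ (s * k))
      - c * \sum_(s < n) (dp i.+1 s * dq j s * w ^+ (s * k))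
      + c * d * \sum_(s < n) (dp i.+1 s * dq 1%N s * w ^+ (s * k)).
  by rewrite !mulr_sumr -!sumrB -big_split /=; apply: eq_bigr => s _; ring.
rewrite expand /pramanujan /qramanujan !(intrM, intrB) -!pmulrn.
case: (ltnP i 3) => [i3'|i3']; rewrite /= ?mulr0n ?mul0r ?subr0 ?addr0 !sum_dvdn_root // !natrM; ring.
Qed.

Lemma class_expand (g : nat -> bool -> algC) s :
  g (pval3 p s) (q %| s)%N =
  \sum_(i < 4) \sum_(j : bool) g i j * ((pval3 p s == i) && ((q %| s)%N == j))%:R.
Proof.
rewrite !big_ord_recr big_ord0 /= !big_bool /=.
by move: (pval3_le3 p s); case: (pval3 p s) => [|[|[|[|]]]] // _; case: (q %| s)%N => /=; ring.
Qed.

Lemma circulant_eigenvalue_class D k :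
  circulant_eigenvalue n w (gcd_indicator n D) k
  = (class_eigenvalue p q (divisor_bits p q D) (pval3 p k) (q %| k)%N)%:~R.
Proof.
rewrite /circulant_eigenvalue /class_eigenvalue rmorph_sum.
under eq_bigr => s _ do
  rewrite /gcd_indicator gcdn_p3q // (class_expand (fun i j => (divisor_bits p q D i j)%:R)) mulr_suml.
rewrite exchange_big /=; apply: eq_bigr => i _; rewrite rmorph_sum.
under eq_bigr => s _ do rewrite mulr_suml.
rewrite exchange_big /=; apply: eq_bigr => j _.
under eq_bigr => s _ do rewrite -mulrA.
by rewrite -mulr_sumr sum_class_root ?(leq_ord i) // !rmorphM /= mulrA.
Qed.

Lemma count_class_eigenvalues bt (P : pred int) :
  ((count P [seq class_eigenvalue p q bt (pval3 p k) (q %| k)%N | k <- iota 0 n])%:R : algC)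
  = (\sum_(i < 4) \sum_(j : bool)
       pramanujan p i 3 * qramanujan q j true * (P (class_eigenvalue p q bt i j))%:Z)%:~R.
Proof.
rewrite natr_count big_map -(subn0 n) -/(index_iota 0 n) big_mkord.
under eq_bigr => k _ do rewrite (class_expand (fun i j => (P (class_eigenvalue p q bt i j))%:R)).
rewrite exchange_big /= rmorph_sum; apply: eq_bigr => i _.
rewrite exchange_big /= rmorph_sum; apply: eq_bigr => j _.
rewrite -mulr_sumr.
have -> : \sum_(k < n) ((pval3 p k == i) && ((q %| k)%N == j))%:R
         = \sum_(k < n) (((pval3 p k == i) && ((q %| k)%N == j))%:R * w ^+ (k * 0)).
  by apply: eq_bigr => k _; rewrite muln0 expr0 mulr1.
rewrite sum_class_root ?(leq_ord i) //.
have -> : pval3 p 0 = 3%N by rewrite /pval3 dvdn0.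
by rewrite dvdn0 !rmorphM /= mulrC.
Qed.

End ClassSums.

(* [ptransform p z v] is [\sum_(i < 4) z i * pramanujan p i v] written out, so that
   it computes and can be fed to [lia]. *)
Definition ptransform (p : int) (z : nat -> int) (v : nat) : int :=
  match v with
  | 0 => z 3%N - z 2%N
  | 1 => z 3%N + (p - 1) * z 2%N - p * z 1%N
  | 2 => z 3%N + (p - 1) * z 2%N + (p ^+ 2 - p) * z 1%N - p ^+ 2 * z 0%N
  | _ => z 3%N + (p - 1) * z 2%N + (p ^+ 2 - p) * z 1%N + (p ^+ 3 - p ^+ 2) * z 0%N
  end.

Definition pclass_size (p : int) (v : nat) : int :=
  match v with 0 => p ^+ 3 - p ^+ 2 | 1 => p ^+ 2 - p | 2 => p - 1 | _ => 1 end.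

Definition qbit_diff (bt : nat -> bool -> bool) i : int := (bt i true)%:Z - (bt i false)%:Z.
Definition qbit0 (bt : nat -> bool -> bool) i : int := (bt i false)%:Z.

Definition eig_qcoprime p bt v := ptransform p (qbit_diff bt) v.
Definition eig_qmult p (q : int) bt v := eig_qcoprime p bt v + q * ptransform p (qbit0 bt) v.

(* The class (v, q coprime to k) has (q - 1) * pclass_size p v elements and the class
   (v, q | k) has pclass_size p v elements. *)
Definition count_at p (q : int) bt (P : pred int) v : int :=
  pclass_size p v * ((q - 1) * (P (eig_qcoprime p bt v))%:Z + (P (eig_qmult p q bt v))%:Z).
Definition class_count p (q : int) bt (P : pred int) : int :=
  count_at p q bt P 0 + count_at p q bt P 1 + count_at p q bt P 2 + count_at p q bt P 3.

Definition pweight p (e : nat -> bool) : int :=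
  pclass_size p 0 * (e 0)%:Z + pclass_size p 1 * (e 1)%:Z
  + pclass_size p 2 * (e 2)%:Z + pclass_size p 3 * (e 3)%:Z.

Lemma class_eigenvalueE p q bt v (wv : bool) : (v <= 3)%N ->
  class_eigenvalue p q bt v wv
  = eig_qcoprime p bt v + wv%:Z * q%:Z * ptransform p (qbit0 bt) v.
Proof.
move=> v3; rewrite /class_eigenvalue !big_ord_recr big_ord0 /= !big_bool /=.
rewrite /pramanujan /qramanujan /pdvd_sum /qdvd_sum /eig_qcoprime /qbit_diff /qbit0.
by case: v v3 => [|[|[|[|]]]] // _; case: wv => /=; rewrite ?PoszM ?natrX; ring.
Qed.

Lemma class_eigenvalue_qcoprime p q bt v : (v <= 3)%N ->
  class_eigenvalue p q bt v false = eig_qcoprime p bt v.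
Proof. by move=> v3; rewrite class_eigenvalueE // /= mul0r addr0. Qed.

Lemma class_eigenvalue_qmult p q bt v : (v <= 3)%N ->
  class_eigenvalue p q bt v true = eig_qmult p q bt v.
Proof. by move=> v3; rewrite class_eigenvalueE // /= mul1r. Qed.

Lemma pramanujan_size p v : (v <= 3)%N -> pramanujan p v 3 = pclass_size p v.
Proof.
rewrite /pramanujan /pdvd_sum /pclass_size.
by case: v => [|[|[|[|]]]] //= _; rewrite ?PoszM ?natrX; ring.
Qed.

Lemma class_countE p q bt (P : pred int) :
  \sum_(i < 4) \sum_(j : bool)
     pramanujan p i 3 * qramanujan q j true * (P (class_eigenvalue p q bt i j))%:Z
  = class_count p q bt P.
Proof.
rewrite !big_ord_recr big_ord0 /= !big_bool /= !pramanujan_size // !class_eigenvalue_qcoprime // !class_eigenvalue_qmult //.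
by rewrite /class_count /count_at /qramanujan /qdvd_sum /= ?PoszM ?natrX /=; ring.
Qed.

Lemma Spec_class_count p q D1 D2 : prime p -> prime q -> p != q ->
  let n := (p ^ 3 * q)%N in
  Spec (ICG_adj n D1) = Spec (ICG_adj n D2) ->
  forall P, class_count p q (divisor_bits p q D1) P = class_count p q (divisor_bits p q D2) P.
Proof.
move=> pP qP pq n HS P.
have n0 : (0 < n)%N by rewrite muln_gt0 expn_gt0 !prime_gt0.
have [w wP] := C_prim_root_exists n0.
pose eigs D := [seq class_eigenvalue p q (divisor_bits p q D) (pval3 p k) (q %| k)%N
               | k <- iota 0 n].
have eigsE D : map intr (eigs D) = [seq circulant_eigenvalue n w (gcd_indicator n D) k
                                   | k <- iota 0 n] :> seq algC.
  by rewrite -map_comp; apply: eq_map => k /=; rewrite (circulant_eigenvalue_class pP qP pq wP).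
have perm12 : perm_eq (eigs D1) (eigs D2).
  apply: (@perm_map_inj _ _ intr (@intr_inj algC)); rewrite !eigsE.
  by apply/allP => mu _; apply/eqP; rewrite -!(Spec_ICG_adj _ _ wP) HS.
apply: (@intr_inj algC); rewrite -!class_countE -!(count_class_eigenvalues pP qP pq wP).
by rewrite (permP perm12).
Qed.

Definition eq_bits (bt1 bt2 : nat -> bool -> bool) := forall i j, (i < 4)%N -> bt1 i j = bt2 i j.

Lemma eq_pweight p (e f : nat -> bool) :
  (forall v, (v < 4)%N -> e v = f v) -> pweight p e = pweight p f.
Proof. by move=> h; rewrite /pweight !h. Qed.

Lemma eq_ptransform p (a b : nat -> int) v :
  (forall i, (i < 4)%N -> a i = b i) -> ptransform p a v = ptransform p b v.
Proof. by move=> e; rewrite /ptransform !e. Qed.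

Lemma ptransformB p (a b : nat -> int) v :
  ptransform p (fun i => a i - b i) v = ptransform p a v - ptransform p b v.
Proof. by case: v => [|[|[|v]]] /=; ring. Qed.

Lemma eq_class_count p q bt1 bt2 P : eq_bits bt1 bt2 ->
  class_count p q bt1 P = class_count p q bt2 P.
Proof.
move=> e.
have ex v : ptransform p (qbit_diff bt1) v = ptransform p (qbit_diff bt2) v.
  by apply: eq_ptransform => i i4; rewrite /qbit_diff !e.
have ec v : ptransform p (qbit0 bt1) v = ptransform p (qbit0 bt2) v.
  by apply: eq_ptransform => i i4; rewrite /qbit0 !e.
by rewrite /class_count /count_at /eig_qmult /eig_qcoprime !ex !ec.
Qed.

Lemma qbit_diff_bound bt i : -1 <= qbit_diff bt i <= 1.
Proof. by rewrite /qbit_diff; case: (bt i true); case: (bt i false). Qed.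

Lemma qbit0_bound bt i : 0 <= qbit0 bt i <= 1.
Proof. by rewrite /qbit0; case: (bt i false). Qed.

Lemma eq_bits_qbits bt1 bt2 :
  (forall i, (i < 4)%N -> qbit_diff bt1 i = qbit_diff bt2 i) ->
  (forall i, (i < 4)%N -> qbit0 bt1 i = qbit0 bt2 i) -> eq_bits bt1 bt2.
Proof.
move=> ed e0 i j i4; move: (ed i i4) (e0 i i4); rewrite /qbit_diff /qbit0.
by case: j; case: (bt1 i true) (bt2 i true) (bt1 i false) (bt2 i false) => [] [] [] [].
Qed.

(* Each class size exceeds the sum of the smaller ones; for p - 1 > 1 this needs p >= 3. *)
Lemma pweight_inj (p : int) (e f : nat -> bool) : 3 <= p -> pweight p e = pweight p f ->
  forall v, (v < 4)%N -> e v = f v.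
Proof.
rewrite /pweight /pclass_size => p3 H.
suff : [/\ e 0 = f 0, e 1 = f 1, e 2 = f 2 & e 3 = f 3]%N by case=> ? ? ? ? [|[|[|[|]]]].
move: H; case: (e 0); case: (e 1); case: (e 2); case: (e 3);
  case: (f 0); case: (f 1); case: (f 2); case: (f 3) => //=;
  rewrite ?expr2 ?exprS ?expr2 => H; exfalso; nia.
Qed.

Lemma class_count_pred1 p q bt t :
  class_count p q bt (pred1 t)
  = (q - 1) * pweight p (fun v => eig_qcoprime p bt v == t)
    + pweight p (fun v => eig_qmult p q bt v == t).
Proof. rewrite /class_count /count_at /pweight; ring. Qed.

(* The eigenvalues with q | k are congruent mod q to those with q coprime to k. *)
Lemma class_count_modq p q bt r :
  class_count p q bt (fun z => (q %| z - r)%Z)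
  = q * pweight p (fun v => (q %| eig_qcoprime p bt v - r)%Z).
Proof.
have shift X Y : (q %| X + q * Y - r)%Z = (q %| X - r)%Z.
  have -> : X + q * Y - r = (X - r) + q * Y by ring.
  by rewrite rpredDr // dvdz_mulr.
by rewrite /class_count /count_at /pweight /eig_qmult !shift; ring.
Qed.

Lemma class_count_modq_eq p q bt1 bt2 : q != 0 ->
  (forall P, class_count p q bt1 P = class_count p q bt2 P) ->
  forall r, pweight p (fun v => (q %| eig_qcoprime p bt1 v - r)%Z)
          = pweight p (fun v => (q %| eig_qcoprime p bt2 v - r)%Z).
Proof. by move=> q0 H r; apply: (mulfI q0); rewrite -!class_count_modq H. Qed.

Lemma dvdz_small_eq0 (q : nat) (t : int) :
  (q%:Z %| t)%Z -> - q%:Z < t -> t < q%:Z -> t = 0.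
Proof.
case/dvdzP => k -> h1 h2.
have [k1|[k1|->]] : 1 <= k \/ k <= -1 \/ k = 0 by lia.
- nia.
- nia.
- by rewrite mul0r.
Qed.

(* Back-substitution through the triangular system [ptransform p d v] for v = 3, 2, 1, 0:
   consecutive differences are p^(3-v) times a small digit, and p is invertible mod q. *)
Lemma ptransform_digits_eq0 (p q : nat) (d : nat -> int) : coprime p q -> (3 <= q)%N ->
  (forall i, (i < 4)%N -> -2 <= d i <= 2) ->
  (forall v, (v < 4)%N -> (q%:Z %| ptransform p%:Z d v)%Z) ->
  forall i, (i < 4)%N -> d i = 0.
Proof.
move=> cpq q3 db dv.
have b0 := db 0%N isT; have b1 := db 1%N isT; have b2 := db 2%N isT; have b3 := db 3%N isT.
have sub v : (v < 3)%N -> (q%:Z %| ptransform p d v.+1 - ptransform p d v)%Z.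
  by move=> v3; rewrite rpredB // dv // ltnW.
have cancel k (t : int) : (q%:Z %| p%:Z ^+ k * t)%Z -> (q%:Z %| t)%Z.
  by rewrite Gauss_dvdzr // coprimezXr // coprimezE /= coprime_sym.
have d0 : d 0%N = 0.
  apply: (@dvdz_small_eq0 q); try lia; apply: (cancel 3%N).
  by have := sub 2%N isT; rewrite /ptransform; congr (_ %| _)%Z; ring.
have d1 : d 1%N = 0.
  apply: (@dvdz_small_eq0 q); try lia; apply: (cancel 2%N).
  by have := sub 1%N isT; rewrite /ptransform d0; congr (_ %| _)%Z; ring.
have d2 : d 2%N = 0.
  apply: (@dvdz_small_eq0 q); try lia; apply: (cancel 1%N).
  by have := sub 0%N isT; rewrite /ptransform d1; congr (_ %| _)%Z; ring.
have d3 : d 3%N = 0.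
  apply: (@dvdz_small_eq0 q); try lia.
  by have := dv 0%N isT; rewrite /ptransform d2 subr0.
by case=> [|[|[|[|]]]].
Qed.

Lemma class_count_inj_odd (p q : nat) bt1 bt2 : prime p -> prime q -> (p < q)%N -> (3 <= p)%N ->
  (forall P, class_count p q bt1 P = class_count p q bt2 P) -> eq_bits bt1 bt2.
Proof.
move=> pP qP pq p3 H.
have cpq : coprime p q by rewrite prime_coprime // dvdn_prime2 // neq_ltn pq.
have q3 : (3 <= q)%N := leq_trans (leqW p3) pq.
have q0 : q%:Z != 0 by rewrite eqz_nat -lt0n prime_gt0.
have p3z : 3 <= p%:Z by rewrite lez_nat.
have ex i : (i < 4)%N -> qbit_diff bt1 i = qbit_diff bt2 i.
  move=> i4; apply/eqP; rewrite -subr_eq0; apply/eqP; move: i i4.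
  apply: (ptransform_digits_eq0 cpq q3) => [j _|v v4].
    by have := qbit_diff_bound bt1 j; have := qbit_diff_bound bt2 j; lia.
  have := pweight_inj p3z (class_count_modq_eq q0 H (eig_qcoprime p bt1 v)) v4.
  by rewrite subrr dvdz0 ptransformB => /esym; rewrite -opprB rpredN.
have eX v : eig_qcoprime p bt1 v = eig_qcoprime p bt2 v by apply: eq_ptransform.
have HZ t : pweight p (fun v => eig_qmult p q bt1 v == t)
          = pweight p (fun v => eig_qmult p q bt2 v == t).
  have := H (pred1 t); rewrite !class_count_pred1.
  rewrite (@eq_pweight _ (fun v => eig_qcoprime p bt1 v == t) (fun v => eig_qcoprime p bt2 v == t)).
    by move/addrI.
  by move=> v _; rewrite eX.
have eZ v : (v < 4)%N -> eig_qmult p q bt1 v = eig_qmult p q bt2 v.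
  by move=> v4; have := pweight_inj p3z (HZ (eig_qmult p q bt1 v)) v4; rewrite eqxx => /esym/eqP.
have ec i : (i < 4)%N -> qbit0 bt1 i = qbit0 bt2 i.
  move=> i4; apply/eqP; rewrite -subr_eq0; apply/eqP; move: i i4.
  apply: (ptransform_digits_eq0 cpq q3) => [j _|v v4].
    by have := qbit0_bound bt1 j; have := qbit0_bound bt2 j; lia.
  have := eZ v v4; rewrite /eig_qmult eX => /addrI /(mulfI q0) e.
  by rewrite ptransformB e subrr dvdz0.
exact: eq_bits_qbits.
Qed.

(* For p = 2 the class sizes are 4, 2, 1, 1.  All eigenvalues on classes with q coprime to
   k lie in [-8, 8], so for q >= 17 congruences mod q still recover them together with
   their q-parts; the resulting data, and for q <= 13 the whole spectrum, are compared
   over all 2^7 divisor sets by computation. *)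
Fixpoint bool_seqs (m : nat) : seq (seq bool) :=
  if m is m'.+1 then [seq b :: s | b <- [:: false; true], s <- bool_seqs m'] else [:: [::]].

(* The bit [bt 3 true] stands for n itself, which is never in D, so seven bits remain. *)
Definition bit_patterns := bool_seqs 7.

Definition decode_bits (s : seq bool) : nat -> bool -> bool :=
  fun i j => if j then (i < 3)%N && nth false s (4 + i) else nth false s i.
Definition encode_bits (bt : nat -> bool -> bool) : seq bool :=
  [:: bt 0%N false; bt 1%N false; bt 2%N false; bt 3%N false;
      bt 0%N true; bt 1%N true; bt 2%N true].

Lemma mem_bit_patterns (a b c d e f g : bool) : [:: a; b; c; d; e; f; g] \in bit_patterns.
Proof. by case: a; case: b; case: c; case: d; case: e; case: f; case: g. Qed.

Lemma encode_bitsK bt : bt 3%N true = false -> eq_bits (decode_bits (encode_bits bt)) bt.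
Proof. by move=> h [|[|[|[|]]]] [] //= _; rewrite h. Qed.

Lemma encode_bits_inj bt1 bt2 : bt1 3%N true = false -> bt2 3%N true = false ->
  encode_bits bt1 = encode_bits bt2 -> eq_bits bt1 bt2.
Proof. by move=> h1 h2 [] e0 e1 e2 e3 e4 e5 e6 [|[|[|[|]]]] [] //= _; rewrite ?h1 ?h2. Qed.

(* A weighted multiset is a list of (key, weight) pairs. *)
Definition wcount (K : eqType) (d : seq (K * int)) (t : K) : int :=
  foldr (fun x acc => (x.1 == t)%:Z * x.2 + acc) 0 d.
Definition same_wcount (K : eqType) (d1 d2 : seq (K * int)) : bool :=
  all (fun t => wcount d1 t == wcount d2 t) (map fst d1 ++ map fst d2).
Definition wcount_separates (K : eqType) (dat : seq bool -> seq (K * int)) : bool :=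
  all (fun s1 => all (fun s2 => same_wcount (dat s1) (dat s2) ==> (s1 == s2)) bit_patterns)
    bit_patterns.

Lemma wcount_separatesP (K : eqType) (dat : seq bool -> seq (K * int)) s1 s2 :
  wcount_separates dat -> s1 \in bit_patterns -> s2 \in bit_patterns ->
  (forall t, wcount (dat s1) t = wcount (dat s2) t) -> s1 = s2.
Proof.
move=> /allP/(_ s1) sep m1 m2 e; have /allP/(_ s2 m2)/implyP := sep m1.
by move=> h; apply/eqP/h/allP => t _; rewrite e.
Qed.

Definition spectrum_data (q : int) (s : seq bool) : seq (int * int) :=
  [seq (eig_qcoprime 2 (decode_bits s) v, (q - 1) * pclass_size 2 v) | v <- iota 0 4] ++
  [seq (eig_qmult 2 q (decode_bits s) v, pclass_size 2 v) | v <- iota 0 4].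

Lemma wcount_spectrum_data q s t :
  wcount (spectrum_data q s) t = class_count 2 q (decode_bits s) (pred1 t).
Proof. rewrite /wcount /spectrum_data /class_count /count_at /=; ring. Qed.

Lemma class_count_inj2_small (q : nat) bt1 bt2 : wcount_separates (spectrum_data q) ->
  bt1 3%N true = false -> bt2 3%N true = false ->
  (forall P, class_count 2 q bt1 P = class_count 2 q bt2 P) -> eq_bits bt1 bt2.
Proof.
move=> sep h1 h2 H; apply: encode_bits_inj => //.
apply: (wcount_separatesP sep); rewrite ?mem_bit_patterns // => t.
by rewrite !wcount_spectrum_data (eq_class_count _ _ _ (encode_bitsK h1))
  (eq_class_count _ _ _ (encode_bitsK h2)).
Qed.


Definition pair_data (s : seq bool) : seq ((int * int) * int) :=
  [seq ((eig_qcoprime 2 (decode_bits s) v, ptransform 2 (qbit0 (decode_bits s)) v),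
        pclass_size 2 v) | v <- iota 0 4].

Definition pair_count p bt a b : int :=
  pweight p (fun v => (eig_qcoprime p bt v == a) && (ptransform p (qbit0 bt) v == b)).

Lemma wcount_pair_data s a b : wcount (pair_data s) (a, b) = pair_count 2 (decode_bits s) a b.
Proof. rewrite /wcount /pair_data /pair_count /pweight /= !xpair_eqE; ring. Qed.

Lemma eq_pair_count p bt1 bt2 a b : eq_bits bt1 bt2 -> pair_count p bt1 a b = pair_count p bt2 a b.
Proof.
move=> e; have ex v : eig_qcoprime p bt1 v = eig_qcoprime p bt2 v.
  by apply: eq_ptransform => i i4; rewrite /qbit_diff !e.
have ec v : ptransform p (qbit0 bt1) v = ptransform p (qbit0 bt2) v.
  by apply: eq_ptransform => i i4; rewrite /qbit0 !e.
by apply: eq_pweight => v _; rewrite ex ec.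
Qed.

Lemma eig_qcoprime2_bound bt v : -8 <= eig_qcoprime 2 bt v <= 8.
Proof.
have := qbit_diff_bound bt 0; have := qbit_diff_bound bt 1.
have := qbit_diff_bound bt 2; have := qbit_diff_bound bt 3.
rewrite /eig_qcoprime /ptransform; case: v => [|[|[|v]]]; rewrite /= ?(exprS, expr0); lia.
Qed.

Section LargeQ.
Variable q : nat.
Hypothesis q17 : (17 <= q)%N.

Lemma dvdz_sub_small (X t : int) : -8 <= X <= 8 -> -8 <= t <= 8 ->
  (q%:Z %| X - t)%Z = (X == t).
Proof.
move=> hX ht; apply/idP/eqP => [h|->]; last by rewrite subrr dvdz0.
by apply/eqP; rewrite -subr_eq0; apply/eqP; apply: (dvdz_small_eq0 h); lia.
Qed.

Lemma eq_add_qmul (X Y a b : int) : -8 <= X <= 8 -> -8 <= a <= 8 ->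
  (X + q%:Z * Y == a + q%:Z * b) = (X == a) && (Y == b).
Proof.
move=> hX ha; apply/eqP/andP => [e|[/eqP -> /eqP ->] //].
have xa : X = a.
  apply/eqP; rewrite -dvdz_sub_small //; apply/dvdzP; exists (b - Y).
  by move: e; lia.
split; apply/eqP => //; move: e; rewrite xa => /addrI /mulfI -> //.
by rewrite eqz_nat -lt0n; apply: leq_trans q17.
Qed.

Lemma class_count_inj2_large bt1 bt2 : bt1 3%N true = false -> bt2 3%N true = false ->
  (forall P, class_count 2 q bt1 P = class_count 2 q bt2 P) -> eq_bits bt1 bt2.
Proof.
move=> h1 h2 H.
have q0 : q%:Z != 0 by rewrite eqz_nat -lt0n; apply: leq_trans q17.
have out bt a (e : nat -> bool) : ~~ (-8 <= a <= 8) ->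
    (forall v, e v -> eig_qcoprime 2 bt v = a) -> pweight 2 e = 0.
  move=> ab ea; rewrite /pweight.
  suff eF : forall v, e v = false by rewrite !eF.
  by move=> v; apply/negP => /ea ev; move: ab; rewrite -ev eig_qcoprime2_bound.
have HX t : pweight 2 (fun v => eig_qcoprime 2 bt1 v == t)
          = pweight 2 (fun v => eig_qcoprime 2 bt2 v == t).
  have [tb|tb] := boolP (-8 <= t <= 8); last by rewrite (out bt1 t) 1?(out bt2 t) // => v /eqP.
  have := class_count_modq_eq q0 H t.
  by rewrite !(eq_pweight _ (fun v _ => dvdz_sub_small (eig_qcoprime2_bound _ v) tb)).
have HZ t : pweight 2 (fun v => eig_qmult 2 q bt1 v == t)
          = pweight 2 (fun v => eig_qmult 2 q bt2 v == t).
  by have := H (pred1 t); rewrite !class_count_pred1 HX => /addrI.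
have HP a b : pair_count 2 bt1 a b = pair_count 2 bt2 a b.
  have [ab|ab] := boolP (-8 <= a <= 8); last by rewrite /pair_count (out bt1 a) 1?(out bt2 a) // => v /andP[/eqP].
  have := HZ (a + q%:Z * b); rewrite /eig_qmult.
  by rewrite !(eq_pweight _ (fun v _ => eq_add_qmul _ _ (eig_qcoprime2_bound _ v) ab)).
apply: encode_bits_inj => //; apply: (@wcount_separatesP _ pair_data).
- by vm_compute.
- exact: mem_bit_patterns.
- exact: mem_bit_patterns.
case=> a b; rewrite !wcount_pair_data.
by rewrite (eq_pair_count _ _ _ (encode_bitsK h1)) (eq_pair_count _ _ _ (encode_bitsK h2)).
Qed.

End LargeQ.

Lemma separates3 : wcount_separates (spectrum_data 3). Proof. by vm_compute. Qed.
Lemma separates5 : wcount_separates (spectrum_data 5). Proof. by vm_compute. Qed.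
Lemma separates7 : wcount_separates (spectrum_data 7). Proof. by vm_compute. Qed.
Lemma separates11 : wcount_separates (spectrum_data 11). Proof. by vm_compute. Qed.
Lemma separates13 : wcount_separates (spectrum_data 13). Proof. by vm_compute. Qed.

Lemma class_count_inj2 (q : nat) bt1 bt2 : prime q -> (2 < q)%N ->
  bt1 3%N true = false -> bt2 3%N true = false ->
  (forall P, class_count 2 q bt1 P = class_count 2 q bt2 P) -> eq_bits bt1 bt2.
Proof.
move=> qP q2 h1 h2 H.
have [q17|q17] := ltnP q 17; last exact: (class_count_inj2_large q17 h1 h2 H).
apply: class_count_inj2_small h1 h2 H.
have : q \in [:: 3; 5; 7; 11; 13]%N by move: q qP q2 q17; do 17! case=> //.
rewrite !inE => /orP[|/orP[|/orP[|/orP[]]]] /eqP ->.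
- exact: separates3.
- exact: separates5.
- exact: separates7.
- exact: separates11.
- exact: separates13.
Qed.

Lemma class_count_inj (p q : nat) bt1 bt2 : prime p -> prime q -> (p < q)%N ->
  bt1 3%N true = false -> bt2 3%N true = false ->
  (forall P, class_count p q bt1 P = class_count p q bt2 P) -> eq_bits bt1 bt2.
Proof.
move=> pP qP pq h1 h2 H.
have [p3|p3] := ltnP p 3; last exact: class_count_inj_odd pP qP pq p3 H.
have p2 : p = 2%N by case: p pP p3 {pq H} => [|[|[|]]].
by move: pq H; rewrite p2 => pq H; apply: class_count_inj2 qP pq h1 h2 H.
Qed.

Theorem theorem1p4 (p q : nat) (D1 D2 : seq nat) :
  prime p -> prime q -> (p < q)%N ->
  let n := (p ^ 3 * q)%N in
  {subset D1 <= [pred d | (d %| n)%N && (d != n)]} ->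
  {subset D2 <= [pred d | (d %| n)%N && (d != n)]} ->
  Spec (ICG_adj n D1) = Spec (ICG_adj n D2) ->
  D1 =i D2.
Proof.
move=> pP qP pq n S1 S2 HS.
have pnq : p != q by rewrite neq_ltn pq.
have n_notin D : {subset D <= [pred d | (d %| n)%N && (d != n)]} ->
    divisor_bits p q D 3 true = false.
  by move=> S; apply/negP => /S /andP[_]; rewrite expn1 eqxx.
have bits := class_count_inj pP qP pq (n_notin _ S1) (n_notin _ S2)
  (Spec_class_count pP qP pnq HS).
move=> d; have [dD|dD] := boolP ((d \in D1) || (d \in D2)); last first.
  by case/norP: dD => /negbTE -> /negbTE ->.
have dn : (d %| n)%N by case/orP: dD => [/S1|/S2] /andP[].
by have := bits _ (q %| d)%N (pval3_le3 p d); rewrite /divisor_bits -gcdn_p3q // (gcdn_idPl dn).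
Qed.
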